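(* Let $\mathrm{S}$ be a semicopula. Suppose that for every measurable space $(X,\mathcal{A})$, every capacity $\mu$ on $\mathcal{A}$, every $\mathcal{A}$-measurable $f\colon X\to[0,1]$ and every $a\in[0,1]$, $$\mathbf{I}_{\mathrm{S}}\big(\mu,\mathrm{S}(a,f)\big)=\mathrm{S}\big(a,\mathbf{I}_{\mathrm{S}}(\mu,f)\big),$$ where $\mathrm{S}(a,f)$ denotes the function $x\mapsto \mathrm{S}(a,f(x))$. Then $\mathrm{S}$ is associative, i.e. $\mathrm{S}(\mathrm{S}(x,y),z)=\mathrm{S}(x,\mathrm{S}(y,z))$ for all $x,y,z\in[0,1]$, and for each $a\in(0,1)$ the function $[0,1]\ni x\mapsto \mathrm{S}(a,x)$ is continuous.
   Context: A semicopula is a function $\mathrm{S}\colon[0,1]^2\to[0,1]$ that is non-decreasing in each coordinate and has neutral element $1$, i.e. $\mathrm{S}(x,1)=\mathrm{S}(1,x)=x$ for all $x\in[0,1]$. For a measurable space $(X,\mathcal{A})$ (with $X$ nonempty and $\mathcal{A}$ a $\sigma$-algebra), a capacity on $\mathcal{A}$ is a non-decreasing set function $\mu\colon\mathcal{A}\to[0,1]$ with $\mu(\emptyset)=0$ and $\mu(X)=1$. For a capacity $\mu$ and an $\mathcal{A}$-measurable $f\colon X\to[0,1]$, the generalized Sugeno integral is $$\mathbf{I}_{\mathrm{S}}(\mu,f)=\sup_{t\in[0,1]}\mathrm{S}\big(t,\mu(\{x\in X: f(x)\ge t\})\big).$$ *)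

From Stdlib Require Import Reals ClassicalEpsilon.
Open Scope R_scope.

(* Semicopula on [0,1]; S is a total function on R x R, constrained on [0,1]^2. *)
Definition semicopula (S : R -> R -> R) : Prop :=
  (forall x y, 0 <= x <= 1 -> 0 <= y <= 1 -> 0 <= S x y <= 1) /\
  (forall x x' y, 0 <= x <= 1 -> 0 <= x' <= 1 -> 0 <= y <= 1 ->
      x <= x' -> S x y <= S x' y) /\
  (forall x y y', 0 <= x <= 1 -> 0 <= y <= 1 -> 0 <= y' <= 1 ->
      y <= y' -> S x y <= S x y') /\
  (forall x, 0 <= x <= 1 -> S x 1 = x /\ S 1 x = x).

Definition sigma_algebra (X : Type) (A : (X -> Prop) -> Prop) : Prop :=
  A (fun _ => True) /\
  (forall E, A E -> A (fun x => ~ E x)) /\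
  (forall En : nat -> X -> Prop, (forall n, A (En n)) ->
      A (fun x => exists n, En n x)).

Definition Borel (B : R -> Prop) : Prop :=
  forall A : (R -> Prop) -> Prop, sigma_algebra R A ->
    (forall U : R -> Prop,
        (forall x, U x -> exists e, e > 0 /\ forall y, Rabs (y - x) < e -> U y) ->
        A U) ->
    A B.

Definition measurable_fun (X : Type) (A : (X -> Prop) -> Prop) (f : X -> R) : Prop :=
  forall B, Borel B -> A (fun x => B (f x)).

Definition capacity (X : Type) (A : (X -> Prop) -> Prop) (mu : (X -> Prop) -> R) : Prop :=
  mu (fun _ => False) = 0 /\ mu (fun _ => True) = 1 /\
  (forall E F, A E -> A F -> (forall x, E x -> F x) -> mu E <= mu F) /\
  (forall E, A E -> 0 <= mu E <= 1).

Definition Rsup (E : R -> Prop) : R :=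
  epsilon (inhabits 0) (fun m => is_lub E m).

Definition sugeno (S : R -> R -> R) (X : Type) (mu : (X -> Prop) -> R) (f : X -> R) : R :=
  Rsup (fun v => exists t, 0 <= t <= 1 /\ v = S t (mu (fun x => f x >= t))).

From Stdlib Require Import Reals Lra ClassicalEpsilon Classical.
Open Scope R_scope.

(* Testing the homogeneity of the Sugeno integral on a two-point space whose
   capacity gives the point [true] the weight [z] yields associativity.
   Testing it on the greatest capacity (1 on every nonempty set) and on the
   least one (1 only on the whole space), for which the Sugeno integral is the
   supremum, resp. the infimum, of [f], shows that [S a] commutes with suprema
   and infima of nonempty subsets of [0,1]; applied to [0,x) and (x,1] this is
   left and right continuity of the nondecreasing map [S a]. *)

Lemma is_lub_ext (E E' : R -> Prop) m :
  (forall v, E v <-> E' v) -> is_lub E m -> is_lub E' m.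
Proof.
  intros HE [Hub Hleast]. split.
  - intros v Hv. apply Hub, HE, Hv.
  - intros b Hb. apply Hleast. intros v Hv. apply Hb, HE, Hv.
Qed.

Lemma is_lub_Ico x : 0 < x -> is_lub (fun y => 0 <= y < x) x.
Proof.
  intro Hx. split.
  - intros y Hy. lra.
  - intros b Hb. apply Rnot_lt_le. intro Hbx.
    assert (0 <= b) by (apply Hb; lra).
    assert ((b + x) / 2 <= b) by (apply Hb; lra).
    lra.
Qed.

Lemma is_lub_lower_bounds_Ioc x : x < 1 ->
  is_lub (fun t => forall y, x < y <= 1 -> t <= y) x.
Proof.
  intro Hx. split.
  - intros t Ht. apply Rnot_lt_le. intro Hxt.
    assert (t <= 1) by (apply Ht; lra).
    assert (t <= (x + t) / 2) by (apply Ht; lra).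
    lra.
  - intros b Hb. apply Hb. intros y Hy. lra.
Qed.

Lemma limit1_in_nondecreasing (g : R -> R) x :
  (forall y y', 0 <= y <= 1 -> 0 <= y' <= 1 -> y <= y' -> g y <= g y') ->
  0 <= x <= 1 ->
  (0 < x -> forall eps, eps > 0 -> exists y, 0 <= y < x /\ g x - eps < g y) ->
  (x < 1 -> forall eps, eps > 0 -> exists y, x < y <= 1 /\ g y < g x + eps) ->
  limit1_in g (fun y => 0 <= y <= 1) (g x) x.
Proof.
  intros Hmono Hx Hleft Hright eps Heps.
  assert (HL : exists dl, dl > 0 /\
            forall y, 0 <= y <= x -> x - y < dl -> g x - eps < g y).
  { destruct (Req_dec x 0) as [-> | Hx0].
    - exists 1. split; [lra |]. intros y Hy _. replace y with 0 by lra. lra.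
    - destruct (Hleft ltac:(lra) eps Heps) as (y0 & Hy0 & Hgy0).
      exists (x - y0). split; [lra |]. intros y Hy Hd.
      assert (g y0 <= g y) by (apply Hmono; lra). lra. }
  assert (HR : exists dr, dr > 0 /\
            forall y, x <= y <= 1 -> y - x < dr -> g y < g x + eps).
  { destruct (Req_dec x 1) as [-> | Hx1].
    - exists 1. split; [lra |]. intros y Hy _. replace y with 1 by lra. lra.
    - destruct (Hright ltac:(lra) eps Heps) as (y1 & Hy1 & Hgy1).
      exists (y1 - x). split; [lra |]. intros y Hy Hd.
      assert (g y <= g y1) by (apply Hmono; lra). lra. }
  destruct HL as (dl & Hdl & HL), HR as (dr & Hdr & HR).
  exists (Rmin dl dr). split; [apply Rmin_glb_lt; assumption |].
  intros y [Hy Hd]. simpl in *. unfold Rdist in *.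
  pose proof (Rmin_l dl dr). pose proof (Rmin_r dl dr).
  destruct (Rle_dec y x) as [Hyx | Hyx].
  - rewrite Rabs_left1 in Hd by lra.
    assert (g y <= g x) by (apply Hmono; lra).
    specialize (HL y ltac:(lra) ltac:(lra)).
    rewrite Rabs_left1 by lra. lra.
  - rewrite Rabs_right in Hd by lra.
    assert (g x <= g y) by (apply Hmono; lra).
    specialize (HR y ltac:(lra) ltac:(lra)).
    rewrite Rabs_right by lra. lra.
Qed.

Definition greatest_capacity (X : Type) (E : X -> Prop) : R :=
  if excluded_middle_informative (exists x, E x) then 1 else 0.

Definition least_capacity (X : Type) (E : X -> Prop) : R :=
  if excluded_middle_informative (forall x, E x) then 1 else 0.

Definition two_point_capacity (z : R) (E : bool -> Prop) : R :=
  if excluded_middle_informative (E true /\ E false) then 1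
  else if excluded_middle_informative (E true) then z else 0.

Lemma greatest_capacity_nonempty X (E : X -> Prop) :
  (exists x, E x) -> greatest_capacity X E = 1.
Proof. unfold greatest_capacity. destruct (excluded_middle_informative _); tauto. Qed.

Lemma greatest_capacity_empty X (E : X -> Prop) :
  ~ (exists x, E x) -> greatest_capacity X E = 0.
Proof. unfold greatest_capacity. destruct (excluded_middle_informative _); tauto. Qed.

Lemma least_capacity_full X (E : X -> Prop) :
  (forall x, E x) -> least_capacity X E = 1.
Proof. unfold least_capacity. destruct (excluded_middle_informative _); tauto. Qed.

Lemma least_capacity_not_full X (E : X -> Prop) :
  ~ (forall x, E x) -> least_capacity X E = 0.
Proof. unfold least_capacity. destruct (excluded_middle_informative _); tauto. Qed.

Lemma two_point_capacity_true z (E : bool -> Prop) :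
  E true -> ~ E false -> two_point_capacity z E = z.
Proof.
  intros Ht Hf. unfold two_point_capacity.
  repeat destruct (excluded_middle_informative _); tauto.
Qed.

Lemma two_point_capacity_not_true z (E : bool -> Prop) :
  ~ E true -> two_point_capacity z E = 0.
Proof.
  intro Ht. unfold two_point_capacity.
  repeat destruct (excluded_middle_informative _); tauto.
Qed.

Lemma capacity_greatest_capacity X :
  inhabited X -> capacity X (fun _ => True) (greatest_capacity X).
Proof.
  intros [x0]. unfold capacity, greatest_capacity.
  repeat split; intros;
    repeat destruct (excluded_middle_informative _); firstorder lra.
Qed.

Lemma capacity_least_capacity X :
  inhabited X -> capacity X (fun _ => True) (least_capacity X).
Proof.
  intros [x0]. unfold capacity, least_capacity.
  repeat split; intros;
    repeat destruct (excluded_middle_informative _); firstorder lra.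
Qed.

Lemma capacity_two_point_capacity z :
  0 <= z <= 1 -> capacity bool (fun _ => True) (two_point_capacity z).
Proof.
  intro Hz. unfold capacity, two_point_capacity.
  repeat split; intros;
    repeat destruct (excluded_middle_informative _); firstorder lra.
Qed.

Section Semicopula.

Variable S : R -> R -> R.
Hypothesis HS : semicopula S.

Lemma S_range x y : 0 <= x <= 1 -> 0 <= y <= 1 -> 0 <= S x y <= 1.
Proof. exact (proj1 HS x y). Qed.

Lemma S_le_compat_r x x' y : 0 <= x <= 1 -> 0 <= x' <= 1 -> 0 <= y <= 1 ->
  x <= x' -> S x y <= S x' y.
Proof. exact (proj1 (proj2 HS) x x' y). Qed.

Lemma S_le_compat_l x y y' : 0 <= x <= 1 -> 0 <= y <= 1 -> 0 <= y' <= 1 ->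
  y <= y' -> S x y <= S x y'.
Proof. exact (proj1 (proj2 (proj2 HS)) x y y'). Qed.

Lemma S_1_r x : 0 <= x <= 1 -> S x 1 = x.
Proof. intro Hx. exact (proj1 (proj2 (proj2 (proj2 HS)) x Hx)). Qed.

Lemma S_1_l x : 0 <= x <= 1 -> S 1 x = x.
Proof. intro Hx. exact (proj2 (proj2 (proj2 (proj2 HS)) x Hx)). Qed.

Lemma S_0_r x : 0 <= x <= 1 -> S x 0 = 0.
Proof.
  intro Hx.
  assert (S x 0 <= S 1 0) by (apply S_le_compat_r; lra).
  rewrite S_1_l in H by lra.
  pose proof (S_range x 0 Hx ltac:(lra)). lra.
Qed.

Lemma S_0_l x : 0 <= x <= 1 -> S 0 x = 0.
Proof.
  intro Hx.
  assert (S 0 x <= S 0 1) by (apply S_le_compat_l; lra).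
  rewrite S_1_r in H by lra.
  pose proof (S_range 0 x ltac:(lra) Hx). lra.
Qed.

Section Sugeno.

Variables (X : Type) (mu : (X -> Prop) -> R).
Hypothesis mu_range : forall E, 0 <= mu E <= 1.

Lemma sugeno_is_lub f :
  is_lub (fun v => exists t, 0 <= t <= 1 /\ v = S t (mu (fun x => f x >= t)))
         (sugeno S X mu f).
Proof.
  unfold sugeno, Rsup. apply epsilon_spec.
  destruct (completeness
              (fun v => exists t, 0 <= t <= 1 /\ v = S t (mu (fun x => f x >= t))))
    as [m Hm].
  - exists 1. intros v (t & Ht & ->). apply S_range; auto.
  - exists (S 0 (mu (fun x => f x >= 0))), 0. split; [lra | reflexivity].
  - exists m. exact Hm.
Qed.

Lemma sugeno_le f c :
  (forall t, 0 <= t <= 1 -> S t (mu (fun x => f x >= t)) <= c) -> sugeno S X mu f <= c.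
Proof.
  intro Hc. apply (proj2 (sugeno_is_lub f)).
  intros v (t & Ht & ->). auto.
Qed.

Lemma le_sugeno f t : 0 <= t <= 1 -> S t (mu (fun x => f x >= t)) <= sugeno S X mu f.
Proof. intro Ht. apply (proj1 (sugeno_is_lub f)). exists t. auto. Qed.

Lemma sugeno_ge0 f : 0 <= sugeno S X mu f.
Proof.
  rewrite <- (S_0_l (mu (fun x => f x >= 0))) by apply mu_range.
  apply le_sugeno. lra.
Qed.

End Sugeno.

Lemma greatest_capacity_range X E : 0 <= greatest_capacity X E <= 1.
Proof. unfold greatest_capacity. destruct (excluded_middle_informative _); lra. Qed.

Lemma least_capacity_range X E : 0 <= least_capacity X E <= 1.
Proof. unfold least_capacity. destruct (excluded_middle_informative _); lra. Qed.

Lemma sugeno_greatest_capacity X f :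
  inhabited X -> (forall x, 0 <= f x <= 1) ->
  is_lub (fun v => exists x, v = f x) (sugeno S X (greatest_capacity X) f).
Proof.
  intros [x0] Hf. pose proof (greatest_capacity_range X) as Hmu. split.
  - intros v [x ->].
    pose proof (le_sugeno X _ Hmu f (f x) (Hf x)) as Hx.
    rewrite greatest_capacity_nonempty, S_1_r in Hx by (auto || (exists x; lra)).
    exact Hx.
  - intros b Hb. apply sugeno_le; [exact Hmu |]. intros t Ht.
    destruct (classic (exists x, f x >= t)) as [[x Hx] | Hno].
    + rewrite greatest_capacity_nonempty, S_1_r by (auto || (exists x; exact Hx)).
      assert (f x <= b) by (apply Hb; exists x; reflexivity). lra.
    + rewrite greatest_capacity_empty, S_0_r by (auto || lra).
      assert (f x0 <= b) by (apply Hb; exists x0; reflexivity).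
      specialize (Hf x0). lra.
Qed.

Lemma sugeno_least_capacity X f :
  inhabited X -> (forall x, 0 <= f x <= 1) ->
  is_lub (fun t => forall x, t <= f x) (sugeno S X (least_capacity X) f).
Proof.
  intros [x0] Hf. pose proof (least_capacity_range X) as Hmu. split.
  - intros t Ht.
    destruct (Rlt_or_le t 0) as [Hneg | Hpos].
    + pose proof (sugeno_ge0 X _ Hmu f). lra.
    + assert (t <= 1) by (specialize (Ht x0); specialize (Hf x0); lra).
      pose proof (le_sugeno X _ Hmu f t ltac:(lra)) as Hle.
      rewrite least_capacity_full, S_1_r in Hle
        by (lra || (intro x; specialize (Ht x); lra)).
      exact Hle.
  - intros b Hb. apply sugeno_le; [exact Hmu |]. intros t Ht.
    destruct (classic (forall x, f x >= t)) as [Hall | Hnot].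
    + rewrite least_capacity_full, S_1_r by (auto || lra).
      apply Hb. intro x. specialize (Hall x). lra.
    + rewrite least_capacity_not_full, S_0_r by (auto || lra).
      apply Hb. intro x. specialize (Hf x). lra.
Qed.

Lemma sugeno_two_point_capacity z f :
  0 <= z <= 1 -> f false = 0 -> 0 <= f true <= 1 ->
  sugeno S bool (two_point_capacity z) f = S (f true) z.
Proof.
  intros Hz Hf0 Hf1.
  assert (Hmu : forall E, 0 <= two_point_capacity z E <= 1)
    by (intro E; apply capacity_two_point_capacity; auto).
  pose proof (S_range (f true) z Hf1 Hz).
  apply Rle_antisym.
  - apply sugeno_le; [exact Hmu |]. intros t Ht.
    destruct (Rle_lt_dec t 0) as [Ht0 | Ht0].
    + replace t with 0 by lra. rewrite S_0_l by apply Hmu. lra.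
    + destruct (Rge_dec (f true) t) as [Hge | Hlt].
      * rewrite two_point_capacity_true by (auto || lra).
        apply S_le_compat_r; lra.
      * rewrite two_point_capacity_not_true, S_0_r by (auto || lra). lra.
  - destruct (Req_dec (f true) 0) as [Hf1z | Hf1z].
    + rewrite Hf1z, S_0_l by exact Hz. apply sugeno_ge0, Hmu.
    + pose proof (le_sugeno bool _ Hmu f (f true) Hf1) as Hle.
      rewrite two_point_capacity_true in Hle by lra. exact Hle.
Qed.

Section Homogeneity.

Hypothesis sugeno_scale : forall (X : Type) (mu : (X -> Prop) -> R) (f : X -> R) (a : R),
  inhabited X -> capacity X (fun _ => True) mu ->
  (forall x, 0 <= f x <= 1) -> 0 <= a <= 1 ->
  sugeno S X mu (fun x => S a (f x)) = S a (sugeno S X mu f).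

Lemma S_assoc x y z : 0 <= x <= 1 -> 0 <= y <= 1 -> 0 <= z <= 1 ->
  S (S x y) z = S x (S y z).
Proof.
  intros Hx Hy Hz.
  set (f := fun b : bool => if b then y else 0).
  assert (Hf : forall b, 0 <= f b <= 1) by (intros []; simpl; lra).
  pose proof (sugeno_scale bool (two_point_capacity z) f x (inhabits true)
                (capacity_two_point_capacity z Hz) Hf Hx) as Hscale.
  rewrite !sugeno_two_point_capacity in Hscale; simpl; auto using S_0_r, S_range.
Qed.

Lemma S_sup_preserving (D : R -> Prop) m a :
  (exists y, D y) -> (forall y, D y -> 0 <= y <= 1) -> 0 <= a <= 1 ->
  is_lub D m -> is_lub (fun v => exists y, D y /\ v = S a y) (S a m).
Proof.
  intros [y0 Hy0] HD Ha Hm.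
  set (X := {y : R | D y}).
  set (f := @proj1_sig R D : X -> R).
  assert (HX : inhabited X) by exact (inhabits (exist _ y0 Hy0)).
  assert (Hf : forall x, 0 <= f x <= 1) by (intros [y Hy]; exact (HD y Hy)).
  assert (Hrange : forall g : R -> R,
             forall v, (exists x : X, v = g (f x)) <-> (exists y, D y /\ v = g y)).
  { intros g v. split.
    - intros [[y Hy] ->]. exists y. auto.
    - intros (y & Hy & ->). exists (exist _ y Hy). reflexivity. }
  assert (Hsup : sugeno S X (greatest_capacity X) f = m).
  { apply (is_lub_u (fun v => exists x : X, v = f x)).
    - apply sugeno_greatest_capacity; assumption.
    - apply (is_lub_ext D); [| exact Hm].
      intro v. split.
      + intro Hv. exists (exist _ v Hv). reflexivity.
      + intros [[y Hy] ->]. exact Hy. }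
  rewrite <- Hsup, <- sugeno_scale by auto using capacity_greatest_capacity.
  apply (is_lub_ext (fun v => exists x : X, v = S a (f x))); [apply Hrange |].
  apply sugeno_greatest_capacity; auto.
  intro x. apply S_range; auto.
Qed.

Lemma S_inf_preserving (D : R -> Prop) m a :
  (exists y, D y) -> (forall y, D y -> 0 <= y <= 1) -> 0 <= a <= 1 ->
  is_lub (fun t => forall y, D y -> t <= y) m ->
  is_lub (fun t => forall y, D y -> t <= S a y) (S a m).
Proof.
  intros [y0 Hy0] HD Ha Hm.
  set (X := {y : R | D y}).
  set (f := @proj1_sig R D : X -> R).
  assert (HX : inhabited X) by exact (inhabits (exist _ y0 Hy0)).
  assert (Hf : forall x, 0 <= f x <= 1) by (intros [y Hy]; exact (HD y Hy)).
  assert (Hbounds : forall g : R -> R,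
             forall t, (forall x : X, t <= g (f x)) <-> (forall y, D y -> t <= g y)).
  { intros g t. split.
    - intros Ht y Hy. exact (Ht (exist _ y Hy)).
    - intros Ht [y Hy]. exact (Ht y Hy). }
  assert (Hinf : sugeno S X (least_capacity X) f = m).
  { apply (is_lub_u (fun t => forall x : X, t <= f x)).
    - apply sugeno_least_capacity; assumption.
    - apply (is_lub_ext (fun t => forall y, D y -> t <= y)); [| exact Hm].
      intro t. symmetry. exact (Hbounds id t). }
  rewrite <- Hinf, <- sugeno_scale by auto using capacity_least_capacity.
  apply (is_lub_ext (fun t => forall x : X, t <= S a (f x))); [apply Hbounds |].
  apply sugeno_least_capacity; auto.
  intro x. apply S_range; auto.
Qed.

Lemma S_left_approx a x : 0 <= a <= 1 -> 0 < x <= 1 ->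
  forall eps, eps > 0 -> exists y, 0 <= y < x /\ S a x - eps < S a y.
Proof.
  intros Ha Hx eps Heps. apply NNPP. intro Hno.
  destruct (S_sup_preserving (fun y => 0 <= y < x) x a) as [_ Hleast];
    [exists 0; lra | intros y Hy; lra | exact Ha | apply is_lub_Ico; lra |].
  assert (S a x <= S a x - eps); [| lra].
  apply Hleast. intros v (y & Hy & ->).
  apply Rnot_lt_le. intro Hlt. apply Hno. eauto.
Qed.

Lemma S_right_approx a x : 0 <= a <= 1 -> 0 <= x < 1 ->
  forall eps, eps > 0 -> exists y, x < y <= 1 /\ S a y < S a x + eps.
Proof.
  intros Ha Hx eps Heps. apply NNPP. intro Hno.
  destruct (S_inf_preserving (fun y => x < y <= 1) x a) as [Hub _];
    [exists 1; lra | intros y Hy; lra | exact Ha | apply is_lub_lower_bounds_Ioc; lra |].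
  assert (S a x + eps <= S a x); [| lra].
  apply Hub. intros y Hy.
  apply Rnot_lt_le. intro Hlt. apply Hno. eauto.
Qed.

Lemma S_continuous a x : 0 <= a <= 1 -> 0 <= x <= 1 ->
  limit1_in (S a) (fun y => 0 <= y <= 1) (S a x) x.
Proof.
  intros Ha Hx. apply limit1_in_nondecreasing; [| exact Hx | |].
  - intros y y' Hy Hy'. apply S_le_compat_l; assumption.
  - intro Hx0. apply S_left_approx; lra.
  - intro Hx1. apply S_right_approx; lra.
Qed.

End Homogeneity.

End Semicopula.

Theorem theorem1 (S : R -> R -> R) (HS : semicopula S)
  (Hcomm : forall (X : Type) (A : (X -> Prop) -> Prop) (mu : (X -> Prop) -> R)
             (f : X -> R) (a : R),
      inhabited X -> sigma_algebra X A -> capacity X A mu ->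
      measurable_fun X A f -> (forall x, 0 <= f x <= 1) -> 0 <= a <= 1 ->
      sugeno S X mu (fun x => S a (f x)) = S a (sugeno S X mu f)) :
  (forall x y z, 0 <= x <= 1 -> 0 <= y <= 1 -> 0 <= z <= 1 ->
     S (S x y) z = S x (S y z)) /\
  (forall a, 0 < a < 1 -> forall x, 0 <= x <= 1 ->
     limit1_in (S a) (fun y => 0 <= y <= 1) (S a x) x).
Proof.
  assert (Hscale : forall X mu f a, inhabited X -> capacity X (fun _ => True) mu ->
            (forall x, 0 <= f x <= 1) -> 0 <= a <= 1 ->
            sugeno S X mu (fun x => S a (f x)) = S a (sugeno S X mu f)).
  { intros X mu f a HX Hmu Hf Ha.
    apply (Hcomm X (fun _ => True)); try assumption.
    - repeat split.
    - intros B _. exact I. }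
  split.
  - exact (S_assoc S HS Hscale).
  - intros a Ha x Hx. apply (S_continuous S HS Hscale); lra.
Qed.
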